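(* Let $n_b\ge 1$, $d_l\ge 4$, $L\ge 5$, $M\ge 1$ be integers, and let $H$ be a quasi-cyclic SC-LDPC parity-check matrix with parameters $(n_b,d_l,L,M)$ and reuse $T=3$ (as defined in the context). Then, for every choice of the shift values $p_{x,y}$ satisfying the reuse-$3$ condition, the Tanner graph of $H$ contains a cycle of length at most $10$; in particular its girth is at most $10$.
   Context: Quasi-cyclic SC-LDPC matrix: fix integers $n_b\ge1$ (bit nodes per protograph; one check node per protograph), $d_l\ge 2$, $L\ge1$, $M\ge1$. $H$ is a binary block matrix with $L+d_l-1$ block rows (indexed $x=1,\dots,L+d_l-1$) and $n_bL$ block columns (indexed $y=1,\dots,n_bL$), each block of size $M\times M$. For a block column $y$ put $t(y)=\lceil y/n_b\rceil$. Block $(x,y)$ is the all-zero matrix unless $t(y)\le x\le t(y)+d_l-1$, in which case it equals the circulant permutation matrix $I_{(p_{x,y})}$ for a shift value $p_{x,y}\in\{0,\dots,M-1\}$; here $I_{(p)}$ is the $M\times M$ matrix whose row $r$ ($0\le r\le M-1$) has a single $1$, in column $(r+p)\bmod M$, and zeros elsewhere. Reuse-$T$ condition (periodic time-variant construction with period $T$): $p_{x+T,\,y+Tn_b}=p_{x,y}$ whenever both $(x,y)$ and $(x+T,y+Tn_b)$ are nonzero blocks of $H$; otherwise the shift values are arbitrary. The Tanner graph of $H$ is the bipartite graph with one bit node per column and one check node per row of $H$, a bit node and check node being adjacent iff the corresponding entry of $H$ is $1$. The girth is the length of a shortest cycle in the Tanner graph. *)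

From mathcomp Require Import all_boot.
Set Implicit Arguments. Unset Strict Implicit. Unset Printing Implicit Defensive.

(* t(y) = ceil(y / nb), for nb >= 1 *)
Definition tcol (nb y : nat) : nat := (y + nb - 1) %/ nb.

(* Block (x,y) (1-indexed) lies in the matrix and is a nonzero (circulant) block. *)
Definition nzblock (nb dl L x y : nat) : bool :=
  [&& 1 <= x, x <= L + dl - 1, 1 <= y, y <= nb * L,
      tcol nb y <= x & x <= tcol nb y + dl - 1].

(* Entry of H in row r (0..M-1) of block row x and column c (0..M-1) of block
   column y: block is I_(p x y), whose row r has its 1 in column (r + p) mod M. *)
Definition Hentry (nb dl L M : nat) (p : nat -> nat -> nat)
    (chk : nat * nat) (bit : nat * nat) : bool :=
  let: (x, r) := chk in let: (y, c) := bit in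
  [&& nzblock nb dl L x y, r < M, c < M & c == (r + p x y) %% M].

Definition reuse (nb dl L T : nat) (p : nat -> nat -> nat) : Prop :=
  forall x y, nzblock nb dl L x y -> nzblock nb dl L (x + T) (y + T * nb) ->
    p (x + T) (y + T * nb) = p x y.

(* A cycle of length 2k in the Tanner graph: distinct check nodes chk 0..k-1,
   distinct bit nodes bit 0..k-1, with chk i -- bit i -- chk (i+1 mod k). *)
Definition tanner_cycle (nb dl L M : nat) (p : nat -> nat -> nat) (k : nat)
    (chk bit : nat -> nat * nat) : Prop :=
  [/\ 2 <= k,
      (forall i j, i < k -> j < k -> chk i = chk j -> i = j),
      (forall i j, i < k -> j < k -> bit i = bit j -> i = j) &
      (forall i, i < k ->
         Hentry nb dl L M p (chk i) (bit i) /\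
         Hentry nb dl L M p (chk ((i + 1) %% k)) (bit i))].

From mathcomp Require Import all_boot all_algebra zify ring.
Import GRing.Theory.

(* Every reuse-3 quasi-cyclic SC-LDPC code with d_l >= 4 and L >= 5 has a
   cycle of length at most 10.  Only four block columns are involved: the
   first column of protographs 1, 2, 4 and 5 (bcol nb 0, 1, 3, 4, written
   y0, y1, y3, y4), together with block rows 2, 3, 5, 6.  Write A, B for the
   shifts of rows 2, 3 in column y0, C, D for those in column y1, and E for
   row 5 of column y1.  Reuse with period 3 copies this 2x2 square of shifts
   onto rows 5, 6 of columns y3, y4.
   - If B + C = A + D (mod M), the square itself closes a 4-cycle.
   - Otherwise the block walk
       3 - y0 - 2 - y1 - 5 - y3 - 6 - y4 - 5 - y1 - 3
     has alternating shift sum B - A + C - E + A - B + D - C + E - D = 0, so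
     it lifts to a closed walk of length 10 in the Tanner graph; the two
     revisits of block row 5 and block column y1 land on different rows and
     columns exactly because B + C <> A + D, so the walk is a 10-cycle. *)

(* The first block column of the (t+1)-th protograph; t(bcol nb t) = t + 1. *)
Definition bcol (nb t : nat) : nat := 1 + t * nb.

Lemma tcol_bcol nb t : 0 < nb -> tcol nb (bcol nb t) = t.+1.
Proof.
move=> nb_gt0; rewrite /tcol /bcol.
by rewrite (_ : 1 + t * nb + nb - 1 = t.+1 * nb) ?mulnK // mulSn; lia.
Qed.

Lemma bcol_inj {nb} : 0 < nb -> injective (bcol nb).
Proof. by move=> nb_gt0 s t /addnI /eqP; rewrite eqn_pmul2r // => /eqP. Qed.

Lemma nzblock_bcol nb dl L x t : 0 < nb -> t < L -> t < x <= t + dl ->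
  x <= L + dl - 1 -> nzblock nb dl L x (bcol nb t).
Proof.
move=> nb_gt0 tL /andP[tx xt] xmax; rewrite /nzblock tcol_bcol //.
have : t.+1 * nb <= L * nb by rewrite leq_mul2r tL orbT.
rewrite /bcol mulSn => ?; apply/and5P; split; lia.
Qed.

Lemma reuse3_bcol nb dl L p x t : reuse nb dl L 3 p -> 0 < nb -> t + 3 < L ->
  t < x <= t + dl -> x + 3 <= L + dl - 1 ->
  p (x + 3) (bcol nb (t + 3)) = p x (bcol nb t).
Proof.
move=> reuse3 nb_gt0 tL xt xmax.
have -> : bcol nb (t + 3) = bcol nb t + 3 * nb by rewrite /bcol mulnDl addnA.
by apply: reuse3; rewrite -?addnA -?mulnDl; apply: nzblock_bcol => //; lia.
Qed.

(* The blocks used by the 10-cycle are circulants (this is where d_l >= 4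
   and L >= 5 are needed). *)
Lemma nz_early nb dl L x t : 0 < nb -> 4 <= dl -> 5 <= L ->
  t <= 4 -> t < x <= minn 6 (t + 4) -> nzblock nb dl L x (bcol nb t).
Proof.
move=> nb_gt0 dl_ge4 L_ge5 t_le4 /andP[tx]; rewrite leq_min => /andP[x_le6 xt].
by apply: nzblock_bcol => //; lia.
Qed.

Lemma shift_early nb dl L p x t : reuse nb dl L 3 p -> 0 < nb -> 4 <= dl -> 5 <= L ->
  t <= 1 -> t < x <= 3 -> p (x + 3) (bcol nb (t + 3)) = p x (bcol nb t).
Proof.
move=> reuse3 nb_gt0 dl_ge4 L_ge5 t_le1 /andP[tx x_le3].
by apply: (@reuse3_bcol nb dl L) => //; lia.
Qed.

Lemma tanner_cycle_seq nb dl L M p k (cs bs : seq (nat * nat)) :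
  2 <= k -> size cs = k -> size bs = k -> uniq cs -> uniq bs ->
  (forall i, i < k ->
     Hentry nb dl L M p (nth (0, 0) cs i) (nth (0, 0) bs i) /\
     Hentry nb dl L M p (nth (0, 0) cs ((i + 1) %% k)) (nth (0, 0) bs i)) ->
  tanner_cycle nb dl L M p k (nth (0, 0) cs) (nth (0, 0) bs).
Proof.
move=> k_ge2 size_cs size_bs uniq_cs uniq_bs adj; split=> // i j ik jk.
  by move/eqP; rewrite nth_uniq ?size_cs // => /eqP.
by move/eqP; rewrite nth_uniq ?size_bs // => /eqP.
Qed.

Section ShiftArithmetic.
(* Shifts are handled in Z/MZ with M = m + 2, where offsets can be subtracted. *)
Variable m : nat.
Local Open Scope ring_scope.

Lemma val_natr_Zp n : val (n%:R : 'Z_m.+2) = (n %% m.+2)%N.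
Proof. exact: (@val_Zp_nat m.+2). Qed.

Lemma natr_Zp_eq a b : (a%:R = b%:R :> 'Z_m.+2) <-> (a = b %[mod m.+2])%N.
Proof.
split=> [/(congr1 val)|eq_ab]; first by rewrite !val_natr_Zp.
by apply: val_inj; rewrite !val_natr_Zp.
Qed.

Lemma Hentry_Zp nb dl L p x y (r c : 'Z_m.+2) : nzblock nb dl L x y ->
  c = r + (p x y)%:R -> Hentry nb dl L m.+2 p (x, val r) (y, val c).
Proof. by move=> nz ->; rewrite /Hentry nz !ltn_ord /= val_natr_Zp modnDmr. Qed.

End ShiftArithmetic.

Section Cycles.
Variables (nb dl L M : nat) (p : nat -> nat -> nat).
Hypothesis M_gt0 : (0 < M)%N.
Local Open Scope ring_scope.

Notation nz := (nzblock nb dl L).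
Notation cycle_of_length k :=
  (exists chk bit : nat -> nat * nat, tanner_cycle nb dl L M p k chk bit).

Lemma four_cycle x1 x2 y1 y2 : x1 != x2 -> y1 != y2 ->
  [/\ nz x1 y1, nz x1 y2, nz x2 y1 & nz x2 y2] ->
  (p x1 y1 + p x2 y2 = p x1 y2 + p x2 y1 %[mod M])%N -> cycle_of_length 2.
Proof.
move=> nx ny [nz11 nz12 nz21 nz22] closed.
case: M M_gt0 closed => [//|[_ _|m _ closed]].
  (* For M = 1 every circulant is the 1x1 matrix (1): all offsets are 0. *)
  exists (nth (0, 0) [:: (x1, 0); (x2, 0)]), (nth (0, 0) [:: (y1, 0); (y2, 0)]).
  apply: tanner_cycle_seq => //=; rewrite ?inE ?xpair_eqE ?(negPf nx) ?(negPf ny) //.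
  by case=> [|[|//]] _; rewrite /Hentry /= !modn1 !andbT.
pose P x y : 'Z_m.+2 := (p x y)%:R.
have closedZ : P x1 y1 + P x2 y2 = P x1 y2 + P x2 y1.
  by rewrite -!natrD; apply/natr_Zp_eq.
pose r0 : 'Z_m.+2 := 0; pose r1 := P x1 y1 - P x2 y1.
pose c0 := P x1 y1; pose c1 := P x1 y2.
exists (nth (0, 0) [:: (x1, val r0); (x2, val r1)]),
       (nth (0, 0) [:: (y1, val c0); (y2, val c1)]).
apply: tanner_cycle_seq => //; try by rewrite /= !inE xpair_eqE ?(negPf nx) ?(negPf ny).
case=> [|[|//]] _; split; apply: Hentry_Zp => //; rewrite /r0 /r1 /c0 /c1 -/(P _ _).
- by rewrite add0r.
- by rewrite subrK.
- by rewrite addrAC closedZ addrK.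
- by rewrite add0r.
Qed.

Section TenCycle.
Hypotheses (nb_gt0 : (0 < nb)%N) (dl_ge4 : (4 <= dl)%N) (L_ge5 : (5 <= L)%N).
Hypothesis reuse3 : reuse nb dl L 3 p.

Lemma ten_cycle :
  ~~ (p 3 (bcol nb 0) + p 2 (bcol nb 1) == p 3 (bcol nb 1) + p 2 (bcol nb 0) %[mod M])%N ->
  cycle_of_length 5.
Proof.
(* Every congruence holds mod 1, so M >= 2. *)
case: M M_gt0 => [//|[_|m _ open]]; first by rewrite !modn1.
pose P x y : 'Z_m.+2 := (p x y)%:R.
pose A := P 2 (bcol nb 0); pose B := P 3 (bcol nb 0).
pose C := P 2 (bcol nb 1); pose D := P 3 (bcol nb 1); pose E := P 5 (bcol nb 1).
have openZ : B + C != A + D.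
  apply: contra open => /eqP eqZ; apply/eqP/natr_Zp_eq.
  by rewrite !natrD [RHS]addrC; exact: eqZ.
have reuse_early x t := @shift_early nb dl L p x t reuse3 nb_gt0 dl_ge4 L_ge5.
have reA : P 5 (bcol nb 3) = A by rewrite /P (reuse_early 2 0).
have reB : P 6 (bcol nb 3) = B by rewrite /P (reuse_early 3 0).
have reC : P 5 (bcol nb 4) = C by rewrite /P (reuse_early 2 1).
have reD : P 6 (bcol nb 4) = D by rewrite /P (reuse_early 3 1).
pose r0 : 'Z_m.+2 := 0; pose r1 := B - A; pose r2 := B - A + C - E.
pose r3 := C - E; pose r4 := D - E.
pose c0 := B; pose c1 := B - A + C; pose c2 := B + C - E; pose c3 := C - E + D; pose c4 := D.
have r2_neq_r4 : val r2 != val r4.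
  apply: contra openZ => /eqP/val_inj eq_r24; apply/eqP.
  transitivity (r2 + A + E); first by rewrite /r2; ring.
  by rewrite eq_r24 /r4; ring.
have c1_neq_c4 : val c1 != val c4.
  apply: contra openZ => /eqP/val_inj; rewrite /c1 /c4 => eqBAC.
  by apply/eqP; rewrite -eqBAC; ring.
exists (nth (0, 0) [:: (3, val r0); (2, val r1); (5, val r2); (6, val r3); (5, val r4)]),
  (nth (0, 0) [:: (bcol nb 0, val c0); (bcol nb 1, val c1); (bcol nb 3, val c2);
                  (bcol nb 4, val c3); (bcol nb 1, val c4)]).
apply: tanner_cycle_seq => //.
- by rewrite !cons_uniq !inE !xpair_eqE (negPf r2_neq_r4) !andbF.
- by rewrite !cons_uniq !inE !xpair_eqE !(inj_eq (bcol_inj nb_gt0)) (negPf c1_neq_c4) !andbF.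
case=> [|[|[|[|[|//]]]]] _; split; apply: Hentry_Zp;
  rewrite ?nz_early // /r0 /r1 /r2 /r3 /r4 /c0 /c1 /c2 /c3 /c4 -/(P _ _) ?reA ?reB ?reC ?reD; ring.
Qed.

End TenCycle.

End Cycles.

Theorem lemma3 (nb dl L M : nat) (p : nat -> nat -> nat) :
  1 <= nb -> 4 <= dl -> 5 <= L -> 1 <= M ->
  (forall x y, nzblock nb dl L x y -> p x y < M) ->
  reuse nb dl L 3 p ->
  exists k (chk bit : nat -> nat * nat),
    2 * k <= 10 /\ tanner_cycle nb dl L M p k chk bit.
Proof.
move=> nb_gt0 dl_ge4 L_ge5 M_gt0 _ reuse3.
case: (boolP (p 3 (bcol nb 0) + p 2 (bcol nb 1)
              == p 3 (bcol nb 1) + p 2 (bcol nb 0) %[mod M])) => [closed | open].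
- have [chk [bit cycle4]] : exists chk bit, tanner_cycle nb dl L M p 2 chk bit.
    apply: (@four_cycle nb dl L M p M_gt0 3 2) (eqP closed) => //.
    + by rewrite (inj_eq (bcol_inj nb_gt0)).
    + by split; apply: nz_early.
  by exists 2, chk, bit.
- have [chk [bit cycle10]] := @ten_cycle nb dl L M p M_gt0 nb_gt0 dl_ge4 L_ge5 reuse3 open.
  by exists 5, chk, bit.
Qed.
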